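(* Let $\alpha$ be a Heron angle with $0\le\alpha<\pi/2$, and let $\lambda\ge0$ be a rational number such that $\tan\alpha=\lambda^2$. Then $\alpha=0$.
   Context: An angle $\theta$ is called a Heron angle if both $\sin\theta$ and $\cos\theta$ are rational numbers. *)

From Stdlib Require Import Reals QArith Qreals.
Open Scope R_scope.

Definition is_rational (x : R) : Prop := exists q : Q, x = Q2R q.

Definition heron_angle (theta : R) : Prop :=
  is_rational (sin theta) /\ is_rational (cos theta).

(* Since 1 + tan^2 = 1 / cos^2, the hypothesis tan alpha = lambda^2 makes lambda^4 + 1 the
   square of the rational number 1 / cos alpha.  Clearing denominators yields an integer
   solution of x^4 + y^4 = z^2 with y <> 0, and Fermat's infinite descent shows that then
   x = 0.  Hence lambda = 0, so sin alpha = 0 and alpha = 0. *)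

From Stdlib Require Import Reals QArith Qreals ZArith Znumtheory Lia Lra.

Open Scope Z_scope.

Lemma rel_prime_intro a b : (forall g, (g | a) -> (g | b) -> (g | 1)) -> rel_prime a b.
Proof. intros H. constructor; auto using Z.divide_1_l. Qed.

Lemma rel_prime_common_divisor a b g : rel_prime a b -> (g | a) -> (g | b) -> (g | 1).
Proof. intros [_ _ H]. exact (H g). Qed.

Lemma rel_prime_square a b : rel_prime a b -> rel_prime (a * a) (b * b).
Proof.
  intros H. apply rel_prime_mult; apply rel_prime_sym; apply rel_prime_mult;
  auto using rel_prime_sym.
Qed.

Lemma rel_prime_add_mul a b c : rel_prime a b -> rel_prime a (b + c * a).
Proof. rewrite <- !Zgcd_1_rel_prime, Z.gcd_add_mult_diag_r. auto. Qed.

Lemma gcd_square a b : Z.gcd (a * a) (b * b) = Z.gcd a b * Z.gcd a b.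
Proof.
  set (g := Z.gcd a b).
  destruct (Z.eq_dec g 0) as [g0 | g_neq0].
  { apply Z.gcd_eq_0 in g0 as [-> ->]. reflexivity. }
  destruct (Z.gcd_divide_l a b) as [k Hk], (Z.gcd_divide_r a b) as [l Hl].
  fold g in Hk, Hl.
  assert (Hkl : Z.gcd k l = 1).
  { pose proof (Z.gcd_div_gcd a b g g_neq0 eq_refl) as H.
    now rewrite Hk, Hl, !Z.div_mul in H. }
  replace (a * a) with (g * g * (k * k)) by (rewrite Hk; ring).
  replace (b * b) with (g * g * (l * l)) by (rewrite Hl; ring).
  assert (Hkl2 : Z.gcd (k * k) (l * l) = 1)
    by now apply Zgcd_1_rel_prime, rel_prime_square, Zgcd_1_rel_prime.
  rewrite Z.gcd_mul_mono_l, Hkl2, Z.abs_mul, Z.abs_square; ring.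
Qed.

Lemma square_inj_nonneg a b : 0 <= a -> 0 <= b -> a * a = b * b -> a = b.
Proof.
  intros Ha Hb Hab. apply Z.le_antisymm; apply Z.square_le_simpl_nonneg; lia.
Qed.

Lemma square_divide_square a b : 0 < a -> (a * a | b * b) -> (a | b).
Proof.
  intros Ha Hab.
  apply Z.divide_gcd_iff in Hab; [|nia].
  rewrite gcd_square in Hab.
  assert (Z.gcd a b = a) as <- by (apply square_inj_nonneg; auto using Z.gcd_nonneg; lia).
  apply Z.gcd_divide_r.
Qed.

Lemma coprime_product_square a b c :
  0 <= a -> 0 <= b -> rel_prime a b -> a * b = c * c -> exists d, 0 <= d /\ a = d * d.
Proof.
  intros Ha Hb Hab Habc. exists (Z.gcd a c). split; [apply Z.gcd_nonneg|].
  rewrite <- gcd_square, <- Habc, Z.gcd_mul_mono_l, (proj2 (Zgcd_1_rel_prime a b) Hab).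
  lia.
Qed.

Lemma odd_square x : Z.Odd x -> exists t, x * x = 4 * t + 1.
Proof. intros [k ->]. exists (k * k + k). ring. Qed.

Lemma even_square x : Z.Even x -> exists t, x * x = 4 * t.
Proof. intros [k ->]. exists (k * k). ring. Qed.

Lemma square_mod4 x : exists t, x * x = 4 * t \/ x * x = 4 * t + 1.
Proof.
  destruct (Z.Even_or_Odd x) as [Hx | Hx];
  [destruct (even_square _ Hx) as [t Ht] | destruct (odd_square _ Hx) as [t Ht]]; eauto.
Qed.

Lemma primitive_pythagorean_triple X Y Z :
  0 < X -> 0 < Y -> 0 < Z -> rel_prime X Y -> Z.Odd X -> Z.Even Y ->
  X * X + Y * Y = Z * Z ->
  exists m n, 0 < m /\ 0 < n /\ rel_prime m n /\
    X = m * m - n * n /\ Y = 2 * m * n /\ Z = m * m + n * n.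
Proof.
  intros HX HY HZ HXY HoX HeY Heq.
  destruct (Z.Even_or_Odd Z) as [HeZ | [c Hc]].
  { exfalso. destruct (odd_square _ HoX), (even_square _ HeY), (even_square _ HeZ). lia. }
  destruct HoX as [k Hk], HeY as [y Hy].
  (* A = (Z - X) / 2 and B = (Z + X) / 2 are coprime with product (Y / 2)^2. *)
  set (A := c - k). set (B := c + k + 1).
  assert (HXZ : X < Z) by nia.
  assert (HA : 0 < A) by (unfold A; lia).
  assert (HB : 0 < B) by (unfold B; lia).
  assert (HyAB : y * y = A * B).
  { apply (Z.mul_reg_l _ _ 4); [lia|].
    replace (4 * (y * y)) with (Y * Y) by (subst; ring).
    replace (4 * (A * B)) with (Z * Z - X * X) by (unfold A, B; subst; ring). lia. }
  assert (HAB : rel_prime A B).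
  { apply rel_prime_intro. intros g gA gB.
    apply (rel_prime_common_divisor X (Y * Y)); [now apply rel_prime_mult | |].
    - replace X with (B - A) by (unfold A, B; lia). now apply Z.divide_sub_r.
    - replace (Y * Y) with ((A + B) * (A + B) - (B - A) * (B - A))
        by (unfold A, B; subst; lia).
      apply Z.divide_sub_r; apply Z.divide_mul_l; auto using Z.divide_add_r, Z.divide_sub_r. }
  destruct (coprime_product_square A B y) as [n [Hn HAn]]; [lia | lia | exact HAB | lia |].
  destruct (coprime_product_square B A y) as [m [Hm HBm]];
    [lia | lia | now apply rel_prime_sym | lia |].
  assert (Hy_mn : y = m * n)
    by (apply square_inj_nonneg; [lia | nia | rewrite HyAB, HAn, HBm; ring]).
  assert (Hmn : rel_prime m n).
  { apply rel_prime_intro. intros g gm gn.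
    apply (rel_prime_common_divisor A B); auto;
    [rewrite HAn | rewrite HBm]; now apply Z.divide_mul_l. }
  assert (0 < m) by (destruct (Z.eq_dec m 0) as [->|]; lia).
  assert (0 < n) by (destruct (Z.eq_dec n 0) as [->|]; lia).
  exists m, n. split; [lia|]. split; [lia|]. split; [exact Hmn|].
  unfold A, B in *. lia.
Qed.

Lemma fermat_quartic_descent_step x y z :
  0 < x -> 0 < y -> 0 < z -> rel_prime x y -> Z.Odd x -> Z.Even y ->
  x * x * x * x + y * y * y * y = z * z ->
  exists u v w, 0 < u /\ 0 < v /\ 0 < w /\ w < z /\ u * u * u * u + v * v * v * v = w * w.
Proof.
  (* (x^2, y^2, z) = (m^2 - n^2, 2mn, m^2 + n^2) and then (x, n, m) = (a^2 - b^2, 2ab, a^2 + b^2);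
     so (y/2)^2 = abm with a, b, m pairwise coprime, which makes all three squares:
     a = u^2, b = v^2, m = w^2 and u^4 + v^4 = m = w^2. *)
  intros Hx Hy Hz Hxy Hox Hey Heq.
  destruct (primitive_pythagorean_triple (x * x) (y * y) z)
    as [m [n [Hm [Hn [Hmn [Hx2 [Hy2 Hz2]]]]]]].
  1-3: nia.
  { now apply rel_prime_square. }
  { destruct Hox as [k ->]. exists (2 * k * k + 2 * k). ring. }
  { destruct Hey as [k ->]. exists (2 * k * k). ring. }
  { rewrite <- Heq. ring. }
  destruct (Z.Even_or_Odd n) as [Hne | Hno].
  2:{ exfalso. destruct (odd_square _ Hox), (odd_square _ Hno), (square_mod4 m) as [? []]; lia. }
  assert (Hxn : rel_prime x n).
  { apply (rel_prime_div (x * x)); [|apply Z.divide_factor_l].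
    apply rel_prime_sym. replace (x * x) with (m * m + (- n) * n) by lia.
    apply rel_prime_add_mul, rel_prime_mult; auto using rel_prime_sym. }
  destruct (primitive_pythagorean_triple x n m)
    as [a [b [Ha [Hb [Hab [Hxa [Hnb Hma]]]]]]]; auto; [lia|].
  destruct Hey as [y1 Hy1].
  assert (Hy1s : y1 * y1 = a * (b * m)) by nia.
  assert (Ham : rel_prime a m).
  { rewrite Hma, Z.add_comm. apply rel_prime_add_mul, rel_prime_mult; auto. }
  assert (Hbm : rel_prime b m).
  { rewrite Hma. apply rel_prime_add_mul, rel_prime_mult; auto using rel_prime_sym. }
  destruct (coprime_product_square a (b * m) y1) as [u [Hu Hau]]; [lia | lia | | lia |].
  { apply rel_prime_mult; auto. }
  destruct (coprime_product_square b (a * m) y1) as [v [Hv Hbv]]; [lia | nia | | nia |].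
  { apply rel_prime_mult; auto using rel_prime_sym. }
  destruct (coprime_product_square m (a * b) y1) as [w [Hw Hmw]]; [lia | nia | | nia |].
  { apply rel_prime_mult; auto using rel_prime_sym. }
  assert (0 < u) by (destruct (Z.eq_dec u 0) as [->|]; lia).
  assert (0 < v) by (destruct (Z.eq_dec v 0) as [->|]; lia).
  assert (0 < w) by (destruct (Z.eq_dec w 0) as [->|]; lia).
  assert (w < z).
  { assert (w <= w * w) by (apply Z.le_mul_diag_r; lia).
    assert (m <= m * m) by (apply Z.le_mul_diag_r; lia).
    assert (0 < n * n) by (apply Z.mul_pos_pos; lia).
    lia. }
  exists u, v, w. split; [lia|]. split; [lia|]. split; [lia|]. split; [lia|].
  rewrite <- Hmw, Hma, Hau, Hbv. ring.
Qed.

Lemma fermat_quartic_coprime_smaller x y z :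
  0 < x -> 0 < y -> 0 < z -> rel_prime x y ->
  x * x * x * x + y * y * y * y = z * z ->
  exists u v w, 0 < u /\ 0 < v /\ 0 < w /\ w < z /\ u * u * u * u + v * v * v * v = w * w.
Proof.
  intros Hx Hy Hz Hxy Heq.
  destruct (Z.Even_or_Odd x) as [Hex | Hox], (Z.Even_or_Odd y) as [Hey | Hoy].
  - exfalso. destruct Hex as [k ->], Hey as [l ->].
    pose proof (rel_prime_common_divisor _ _ 2 Hxy
      (Z.divide_factor_l 2 k) (Z.divide_factor_l 2 l)) as H2.
    apply Z.divide_1_r_nonneg in H2; lia.
  - apply (fermat_quartic_descent_step y x z); auto using rel_prime_sym. lia.
  - now apply (fermat_quartic_descent_step x y z).
  - exfalso. destruct (odd_square _ Hox) as [s Hs], (odd_square _ Hoy) as [t Ht],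
      (square_mod4 z) as [r Hr].
    replace (x * x * x * x + y * y * y * y) with ((x * x) * (x * x) + (y * y) * (y * y))
      in Heq by ring.
    rewrite Hs, Ht in Heq. lia.
Qed.

Lemma fermat_quartic_smaller x y z :
  0 < x -> 0 < y -> 0 < z ->
  x * x * x * x + y * y * y * y = z * z ->
  exists u v w, 0 < u /\ 0 < v /\ 0 < w /\ w < z /\ u * u * u * u + v * v * v * v = w * w.
Proof.
  intros Hx Hy Hz Heq.
  set (d := Z.gcd x y).
  destruct (Z.eq_dec d 1) as [Hd1 | Hd1].
  { apply (fermat_quartic_coprime_smaller x y z); auto. now apply Zgcd_1_rel_prime. }
  assert (Hd : 1 < d).
  { assert (d <> 0) by (intros Hd0; apply Z.gcd_eq_0_l in Hd0; lia).
    pose proof (Z.gcd_nonneg x y). lia. }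
  destruct (Z.gcd_divide_l x y) as [x' Hx'], (Z.gcd_divide_r x y) as [y' Hy'].
  fold d in Hx', Hy'.
  assert (Hdz : (d * d | z)).
  { apply square_divide_square; [nia|].
    exists (x' * x' * x' * x' + y' * y' * y' * y'). rewrite <- Heq, Hx', Hy'. ring. }
  destruct Hdz as [z' Hz'].
  assert (0 < x') by nia. assert (0 < y') by nia. assert (0 < z') by nia.
  assert (1 < d * d) by nia.
  exists x', y', z'. split; [lia|]. split; [lia|]. split; [lia|]. split; [nia|].
  apply (Z.mul_reg_l _ _ ((d * d) * (d * d))); [nia|].
  transitivity (z * z); [rewrite <- Heq, Hx', Hy' | rewrite Hz']; ring.
Qed.

Lemma fermat_quartic_positive x y z :
  0 < x -> 0 < y -> 0 < z -> x * x * x * x + y * y * y * y <> z * z.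
Proof.
  intros Hx Hy Hz. assert (Hz0 : 0 <= z) by lia.
  revert x y Hx Hy Hz. pattern z. apply Zlt_0_ind; [|exact Hz0].
  clear z Hz0. intros z IH _ x y Hx Hy Hz Heq.
  destruct (fermat_quartic_smaller x y z) as [u [v [w [Hu [Hv [Hw [Hwz Huvw]]]]]]]; auto.
  exact (IH w (conj (Z.lt_le_incl _ _ Hw) Hwz) u v Hu Hv Hw Huvw).
Qed.

Theorem fermat_quartic x y z : x * x * x * x + y * y * y * y = z * z -> x = 0 \/ y = 0.
Proof.
  intros Heq.
  destruct (Z.eq_dec x 0) as [|Hx]; [now left|]. destruct (Z.eq_dec y 0) as [|Hy]; [now right|].
  exfalso. apply (fermat_quartic_positive (Z.abs x) (Z.abs y) (Z.abs z)); lia.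
Qed.

Open Scope R_scope.

Lemma tan_sqr_plus_1 x : cos x <> 0 -> tan x ^ 2 + 1 = (/ cos x) ^ 2.
Proof.
  intros Hc. pose proof (sin2_cos2 x) as Hpyth. unfold Rsqr in Hpyth.
  unfold tan. transitivity ((sin x ^ 2 + cos x ^ 2) / cos x ^ 2); [field; exact Hc|].
  replace (sin x ^ 2 + cos x ^ 2) with 1 by lra. field. exact Hc.
Qed.

Lemma is_rational_inv x : is_rational x -> x <> 0 -> is_rational (/ x).
Proof.
  intros [q ->] Hq. exists (/ q)%Q. symmetry. apply Q2R_inv.
  intros E. apply Hq. rewrite (Qeq_eqR _ _ E). unfold Q2R; simpl; lra.
Qed.

Lemma rational_quartic_plus_one_square l w :
  is_rational l -> is_rational w -> l ^ 4 + 1 = w ^ 2 -> l = 0.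
Proof.
  intros [ql ->] [qw ->] Heq.
  set (p := Qnum ql). set (q := Z.pos (Qden ql)).
  set (r := Qnum qw). set (s := Z.pos (Qden qw)).
  assert (Hl : Q2R ql = IZR p / IZR q) by reflexivity.
  assert (Hw : Q2R qw = IZR r / IZR s) by reflexivity.
  assert (Hq : IZR q <> 0) by (apply not_0_IZR; discriminate).
  assert (Hs : IZR s <> 0) by (apply not_0_IZR; discriminate).
  assert (HZ : ((p * s) * (p * s) * (p * s) * (p * s) + (q * s) * (q * s) * (q * s) * (q * s)
                = (r * q * q * s) * (r * q * q * s))%Z).
  { apply eq_IZR. rewrite !plus_IZR, !mult_IZR.
    transitivity (IZR q ^ 4 * IZR s ^ 4 * (Q2R ql ^ 4 + 1)); [rewrite Hl; field; auto|].
    rewrite Heq, Hw. field. auto. }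
  assert (Hp : p = 0%Z).
  { destruct (fermat_quartic _ _ _ HZ) as [H | H]; apply Z.mul_eq_0 in H;
    unfold q, s in *; lia. }
  rewrite Hl, Hp. unfold Rdiv. ring.
Qed.

Theorem lemma2 (alpha : R) (lambda : Q) :
  heron_angle alpha ->
  0 <= alpha < PI / 2 ->
  0 <= Q2R lambda ->
  tan alpha = (Q2R lambda) ^ 2 ->
  alpha = 0.
Proof.
  intros [_ Hcos] [Ha0 Ha] _ Htan.
  assert (Hc : 0 < cos alpha) by (apply cos_gt_0; lra).
  assert (Hsec : Q2R lambda ^ 4 + 1 = (/ cos alpha) ^ 2).
  { rewrite <- tan_sqr_plus_1 by lra. rewrite Htan. ring. }
  assert (Hl : Q2R lambda = 0).
  { apply (rational_quartic_plus_one_square _ (/ cos alpha)); [now exists lambda | |exact Hsec].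
    apply is_rational_inv; [exact Hcos | lra]. }
  assert (Hsin : sin alpha = 0).
  { replace (sin alpha) with (tan alpha * cos alpha) by (unfold tan; field; lra).
    rewrite Htan, Hl. ring. }
  destruct Ha0 as [Ha0 | ->]; [|reflexivity].
  pose proof (sin_gt_0 alpha Ha0 ltac:(lra)). lra.
Qed.
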